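(* For every positive integer $h$ there exist positive integers $s,r,R$ with $s,r\ge 2$ such that $\delta=(r+1)(R+1)-sr-1=-h$ and $\mathrm{Perf}(s,r,R)=\emptyset$.
   Context: $q$ is a prime power, $\mathbb F_q^{s\times r}$ the set of $s\times r$ matrices over $\mathbb F_q$ with rows in $\mathbb F_q^{1\times r}$. For a row $y=(y_1,\dots,y_r)$, the NRT weight is $w(y)=\max\{j: y_j\neq 0\}$ if $y\ne0$ and $w(0)=0$; for a matrix, $w(x)=\sum_i w(x_i)$. The NRT metric is $d(x,y)=w(x-y)$; $B(c,R)=\{x: d(x,c)\le R\}$. A code $C$ is $R$-perfect if the balls $B(c,R)$, $c\in C$, are pairwise disjoint and cover $\mathbb F_q^{s\times r}$; non-trivial means $|C|>1$ and $C\ne\mathbb F_q^{s\times r}$. $\mathrm{Perf}(s,r,R)$ is the set of non-trivial $R$-perfect codes in $\mathbb F_q^{s\times r}$. *)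

From mathcomp Require Import all_boot all_order all_algebra all_field.
Set Implicit Arguments. Unset Strict Implicit. Unset Printing Implicit Defensive.
Import GRing.Theory.

(* Matrices in F^{s x r}; columns indexed 0..r-1, i.e. column j has 1-based index j.+1. *)

Definition nrt_row_weight (F : finFieldType) (s r : nat) (x : 'M[F]_(s, r)) (i : 'I_s) : nat :=
  \max_(j < r | x i j != 0%R) j.+1.

Definition nrt_weight (F : finFieldType) (s r : nat) (x : 'M[F]_(s, r)) : nat :=
  \sum_(i < s) nrt_row_weight x i.

Definition nrt_dist (F : finFieldType) (s r : nat) (x y : 'M[F]_(s, r)) : nat :=
  nrt_weight (x - y)%R.

Definition nrt_ball (F : finFieldType) (s r : nat) (c : 'M[F]_(s, r)) (R : nat)
  : {set 'M[F]_(s, r)} := [set x | nrt_dist x c <= R].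

Definition perfect_code (F : finFieldType) (s r R : nat) (C : {set 'M[F]_(s, r)}) : Prop :=
  (forall c1 c2, c1 \in C -> c2 \in C -> c1 != c2 ->
     [disjoint nrt_ball c1 R & nrt_ball c2 R]) /\
  (forall x : 'M[F]_(s, r), exists2 c, c \in C & x \in nrt_ball c R).

Definition nontrivial_code (F : finFieldType) (s r : nat) (C : {set 'M[F]_(s, r)}) : Prop :=
  1 < #|C| /\ C != [set: 'M[F]_(s, r)].

Definition in_Perf (F : finFieldType) (s r R : nat) (C : {set 'M[F]_(s, r)}) : Prop :=
  nontrivial_code C /\ perfect_code R C.

From mathcomp Require Import all_boot all_order all_algebra all_field zify ring.
Import GRing.Theory.
Set Implicit Arguments. Unset Strict Implicit. Unset Printing Implicit Defensive.

(* Take s = 4, R = 2 and r = h + 2, so that delta = 3(r + 1) - 4r - 1 = -h.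
   The argument is the sphere-packing condition: if C is R-perfect then
   |C| * V = q^(sr), where V = |B(0, R)| is the common volume of the balls.
   1. Weight enumerators.  For w : T -> nat on a finite type, the polynomial
      sum_t X^(w t) has coefficients counting elements by weight, and the
      NRT weight enumerator of s x r matrices is the s-th power of the one of
      rows.  A row has weight <= k (k <= r) iff it vanishes from column k on,
      so there are q^k of them; reading off the coefficients of degree <= 2
      of the s-th power gives
        |B(0,2)| = 1 + s(q-1) + s(q^2-q) + C(s,2)(q-1)^2,
      i.e. V = 10q^2 - 12q + 3 for s = 4.
   2. Arithmetic.  No multiple of 10q^2 - 12q + 3 is a power of q (q >= 2):
      it has the divisor (10q^2 - 12q + 3)/gcd(_, 3) > 1 coprime to q. *)

Lemma coprime_not_dvd_expn (m q N : nat) :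
  1 < m -> coprime m q -> ~~ (m %| q ^ N).
Proof.
move=> m_gt1 co_mq; apply/negP => m_dvd.
have := coprime_dvdr m_dvd (coprimeXr N co_mq).
by rewrite /coprime gcdnn => /eqP m_eq1; rewrite m_eq1 in m_gt1.
Qed.

Lemma coprime_mul_add1 (a q : nat) : coprime (a * q + 1) q.
Proof. by rewrite coprime_sym /coprime gcdnMDl gcdn1. Qed.

(* The volume 10q^2 - 12q + 3 of a radius-2 NRT ball in F_q^{4 x r} divides
   no power of q: divide out the common factor 3 when 3 | q. *)
Lemma ball_volume_not_dvd_expn (q N : nat) :
  1 < q -> ~~ ((10 * q - 12) * q + 3 %| q ^ N).
Proof.
move=> q_gt1; have [/dvdnP [k q_eq] | n3q] := boolP (3 %| q).
- set m := (10 * k - 4) * q + 1.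
  have vol_eq : (10 * q - 12) * q + 3 = 3 * m by rewrite /m q_eq; nia.
  have m_gt1 : 1 < m by rewrite /m; nia.
  apply: contraNN (coprime_not_dvd_expn N m_gt1 (coprime_mul_add1 _ _)) => vol_dvd.
  by apply: dvdn_trans vol_dvd; rewrite vol_eq dvdn_mull.
- apply: coprime_not_dvd_expn; first by nia.
  by rewrite coprime_sym /coprime gcdnMDl -/(coprime q 3) coprime_sym prime_coprime.
Qed.

Section WeightEnumerator.
Local Open Scope ring_scope.
Variables (T : finType) (w : T -> nat).

Definition weight_enum : {poly int} := \sum_t 'X^(w t).

Lemma coef_weight_enum k : weight_enum`_k = #|[set t | w t == k]|%:R.
Proof.
rewrite /weight_enum coef_sum -sum1_card natr_sum [RHS]big_mkcond /=.
by apply: eq_bigr => t _; rewrite coefXn inE eq_sym; case: (_ == _).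
Qed.

Lemma weight_enum_partial_sum K :
  \sum_(k < K.+1) weight_enum`_k = #|[set t | (w t <= K)%N]|%:R.
Proof.
elim: K => [|K IH].
  by rewrite big_ord1 coef_weight_enum; congr _%:R; apply: eq_card => t; rewrite !inE leqn0.
rewrite big_ord_recr /= IH coef_weight_enum -natrD -cardsUI.
have -> : [set t | (w t <= K)%N] :&: [set t | w t == K.+1] = set0.
  by apply/setP => t; rewrite !inE; case: eqP => [->|]; rewrite ?ltnn ?andbF.
rewrite cards0 addn0; congr _%:R; apply: eq_card => t.
by rewrite !inE [RHS]leq_eqVlt ltnS orbC.
Qed.

End WeightEnumerator.

Lemma coef_mul_low (R : nzRingType) (p q : {poly R}) :
  [/\ (p * q)`_0 = p`_0 * q`_0, (p * q)`_1 = p`_0 * q`_1 + p`_1 * q`_0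
    & (p * q)`_2 = p`_0 * q`_2 + p`_1 * q`_1 + p`_2 * q`_0]%R.
Proof. by rewrite !coefM !big_ord_recr !big_ord0 /= !add0r. Qed.

Lemma coef_expr_low (R : comNzRingType) (p : {poly R}) (s : nat) : (p`_0 = 1)%R ->
  [/\ (p ^+ s)`_0 = 1, (p ^+ s)`_1 = s%:R * p`_1
    & (p ^+ s)`_2 = s%:R * p`_2 + 'C(s, 2)%:R * p`_1 ^+ 2]%R.
Proof.
move=> p0_eq1; elim: s => [|s [IH0 IH1 IH2]].
  by rewrite expr0 !coefC /= !mul0r addr0.
have [M0 M1 M2] := coef_mul_low p (p ^+ s).
by rewrite exprS M0 M1 M2 IH0 IH1 IH2 p0_eq1 binS bin1 natrD; split; ring.
Qed.

Section NRTBalls.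
Variable F : finFieldType.

Definition row_weight (r : nat) (y : 'rV[F]_r) : nat := nrt_row_weight y ord0.

Lemma row_weight_leq (r : nat) (y : 'rV[F]_r) (k : nat) :
  (row_weight y <= k) = [forall j : 'I_r, (k <= j) ==> (y ord0 j == 0%R)].
Proof.
apply/bigmax_leqP/forallP => [y_le j | y_vanish j yj_neq0].
- by apply/implyP => k_le_j; apply/negPn/negP => /y_le; rewrite ltnNge k_le_j.
- by have := y_vanish j; rewrite (negbTE yj_neq0) implybF -ltnNge.
Qed.

(* Rows of weight at most k <= r are the rows supported on the first k
   columns: extension by zero is a bijection from F^k onto them. *)
Lemma card_row_weight_leq (r k : nat) : k <= r ->
  #|[set y : 'rV[F]_r | row_weight y <= k]| = #|F| ^ k.
Proof.
move=> k_le_r.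
pose ext (v : {ffun 'I_k -> F}) : 'rV[F]_r := (\row_j oapp v 0 (insub (val j)))%R.
have extE v (i : 'I_k) : ext v ord0 (widen_ord k_le_r i) = v i by rewrite mxE /= valK.
have ext_inj : injective ext.
  by move=> v1 v2 eq_ext; apply/ffunP => i; rewrite -!extE eq_ext.
rewrite -[in RHS](card_ord k) -card_ffun -cardsT -(card_imset _ ext_inj).
apply: eq_card => y; rewrite !inE row_weight_leq.
apply/forallP/imsetP => [y_vanish | [v _ ->] j].
- exists [ffun i => y ord0 (widen_ord k_le_r i)] => //.
  apply/rowP => j; rewrite mxE; case: insubP => [i _ ij | j_ge_k] /=.
    by rewrite ffunE; congr (y _ _); apply: val_inj.
  by move: (y_vanish j); rewrite leqNgt j_ge_k => /eqP ->.
- rewrite /ext mxE; apply/implyP; case: insubP => [i j_lt_k _|] //=.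
  by rewrite leqNgt j_lt_k.
Qed.

(* The weight enumerator of s x r matrices is the s-th power of the weight
   enumerator of rows, since the NRT weight is additive over rows. *)
Lemma weight_enum_mx (s r : nat) :
  weight_enum (@nrt_weight F s r) = (weight_enum (@row_weight r) ^+ s)%R.
Proof.
rewrite /weight_enum -[in RHS](card_ord s) -prodr_const bigA_distr_bigA /=.
pose of_rows (f : {ffun 'I_s -> 'rV[F]_r}) : 'M[F]_(s, r) := (\matrix_(i, j) f i ord0 j)%R.
pose rows (x : 'M[F]_(s, r)) : {ffun 'I_s -> 'rV[F]_r} := [ffun i => row i x].
have of_rowsK : cancel of_rows rows.
  move=> f; apply/ffunP => i; rewrite ffunE.
  by apply/matrixP => a j; rewrite (ord1 a) !mxE.
rewrite (reindex of_rows); last by exists rows => // x _; apply/matrixP => i j; rewrite !mxE ffunE mxE.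
apply: eq_bigr => f _; rewrite /nrt_weight -prodrXr; apply: eq_bigr => i _.
rewrite /row_weight /nrt_row_weight; congr ('X^(_))%R.
by apply: eq_bigl => j; rewrite !mxE.
Qed.

Lemma card_nrt_ball0_2 (s r : nat) : 1 < r ->
  (#|nrt_ball (0 : 'M[F]_(s, r)) 2|%:R =
    1 + s%:R * (#|F|%:R - 1) + s%:R * (#|F|%:R ^+ 2 - #|F|%:R)
      + 'C(s, 2)%:R * (#|F|%:R - 1) ^+ 2 :> int)%R.
Proof.
move=> r_gt1; set q : int := (#|F|%:R)%R; set G := weight_enum (@row_weight r).
have G_sum k : k <= 2 -> (\sum_(i < k.+1) G`_i = q ^+ k)%R.
  move=> k_le2; rewrite weight_enum_partial_sum card_row_weight_leq ?natrX //.
  exact: leq_trans k_le2 r_gt1.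
have G0 : (G`_0 = 1)%R by have := G_sum 0 isT; rewrite big_ord1.
have G1 : (G`_1 = q - 1)%R.
  have -> : (G`_1 = G`_0 + G`_1 - 1)%R by rewrite G0; ring.
  by have := G_sum 1 isT; rewrite big_ord_recr big_ord1 expr1 => ->.
have G2 : (G`_2 = q ^+ 2 - q)%R.
  have -> : (G`_2 = G`_0 + G`_1 + G`_2 - q)%R by rewrite G0 G1; ring.
  by have := G_sum 2 isT; rewrite !big_ord_recr big_ord0 /= add0r => ->.
have ball_eq : nrt_ball (0 : 'M[F]_(s, r)) 2 = [set x | nrt_weight x <= 2].
  by apply/setP => x; rewrite !inE /nrt_dist subr0.
have [P0 P1 P2] := coef_expr_low s G0.
rewrite ball_eq -weight_enum_partial_sum weight_enum_mx.
by rewrite !big_ord_recr big_ord0 /= add0r P0 P1 P2 G1 G2; ring.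
Qed.

Lemma card_nrt_ball_4_2 (r : nat) : 1 < r ->
  #|nrt_ball (0 : 'M[F]_(4, r)) 2| = (10 * #|F| - 12) * #|F| + 3.
Proof.
move=> r_gt1; have q_gt1 := finNzRing_gt1 F.
apply/eqP; rewrite -(Num.Theory.eqr_nat int) card_nrt_ball0_2 //.
rewrite natrD natrM natrB; last exact: leq_trans (leq_mul (leqnn 10) q_gt1).
by rewrite (_ : 'C(4, 2) = 6) //; apply/eqP; ring.
Qed.

(* Balls of equal radius have equal volume: B(c, R) = B(0, R) + c. *)
Lemma card_nrt_ball (s r R : nat) (c : 'M[F]_(s, r)) :
  #|nrt_ball c R| = #|nrt_ball (0 : 'M[F]_(s, r)) R|.
Proof.
have -> : nrt_ball c R = [set (y + c)%R | y in nrt_ball 0 R].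
  apply/setP => x; apply/idP/imsetP.
  - move=> x_in; exists (x - c)%R; last by rewrite subrK.
    by move: x_in; rewrite !inE /nrt_dist subr0.
  - by case=> y; rewrite !inE /nrt_dist subr0 => y_in ->; rewrite addrK.
by rewrite card_imset //; apply: addIr.
Qed.

(* Sphere-packing condition: an R-perfect code has |C| * |B(0,R)| = q^(sr),
   since every matrix lies in exactly one ball around a codeword. *)
Lemma perfect_code_card (s r R : nat) (C : {set 'M[F]_(s, r)}) :
  perfect_code R C -> #|C| * #|nrt_ball (0 : 'M[F]_(s, r)) R| = #|F| ^ (s * r).
Proof.
case=> balls_disjoint balls_cover; rewrite -card_mx.
have in_one_ball (x : 'M[F]_(s, r)) : \sum_(c in C) (x \in nrt_ball c R : nat) = 1.
  have [c0 c0_in x_in] := balls_cover x.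
  rewrite (bigD1 c0) //= x_in big1 // => c /andP [c_in c_neq].
  have := balls_disjoint c c0 c_in c0_in c_neq; rewrite disjoint_sym.
  by move=> /disjointFr /(_ x_in) ->.
rewrite -sum_nat_const -[in RHS]sum1_card.
rewrite -(eq_bigr _ (fun x _ => in_one_ball x)) exchange_big; apply: eq_bigr => c _.
rewrite -(card_nrt_ball R c) -sum1_card big_mkcond /=.
by apply: eq_bigr => x _; case: (x \in _).
Qed.

End NRTBalls.

Theorem mainTheorem14 (F : finFieldType) (h : nat) : (0 < h)%N ->
  exists s r R : nat,
    [/\ (2 <= s)%N, (2 <= r)%N, (0 < R)%N,
        (((r + 1) * (R + 1))%:Z - (s * r)%:Z - 1 = - (h%:Z))%R
      & forall C : {set 'M[F]_(s, r)}, ~ in_Perf R C].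
Proof.
move=> h_gt0; exists 4, (h + 2), 2; split => //; first by lia.
- lia.
- move=> C [_ C_perfect].
  have packing := perfect_code_card C_perfect.
  rewrite card_nrt_ball_4_2 ?addn2 // in packing.
  have /negP := ball_volume_not_dvd_expn (4 * (h + 2)) (finNzRing_gt1 F); apply.
  by rewrite -packing dvdn_mull.
Qed.
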